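(* Fix integers $n,L\ge1$ and $\delta>0$. Consider the $L$-layer linear Transformer acting on $Z_l\in\mathbb{R}^{3n\times n}$ by $$Z_{l+1}=Z_l+W^V_l Z_l Z_l^\top (W^Q_l)^\top W^K_l Z_l+W^R_l Z_l,$$ with weights $W^V_l,W^Q_l,W^K_l,W^R_l\in\mathbb{R}^{3n\times 3n}$, and for a graph Laplacian $\mathcal{L}\in\mathbb{R}^{n\times n}$ let the input be $Z_0^\top=\begin{bmatrix}(\hat I_{n\times n}-\delta\mathcal{L}), & I_{n\times n}, & \delta I_{n\times n}\end{bmatrix}$. Then there exists a choice of the weights such that for every connected graph on $n$ vertices whose Laplacian has smallest nonzero eigenvalue $\lambda_{\min}$ and largest eigenvalue $\lambda_{\max}\le1/\delta$, $$\left\|[Z_L]_{2n+1\ldots3n}-\mathcal{L}^\dagger\right\|_2\le\frac{1}{\lambda_{\min}}\exp\!\left(-\delta 2^{L}\lambda_{\min}\right).$$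
   Context: A graph has $n$ vertices, $d$ edges and positive edge resistances $r_j$; graphs are connected. With an arbitrary edge orientation, the incidence matrix $B\in\mathbb{R}^{n\times d}$ has $B_{ij}=\mp1/\sqrt{r_j}$ if $e_j$ leaves/enters vertex $i$ and $0$ otherwise, and $\mathcal{L}=BB^\top$. $\mathcal{L}^\dagger$ is the pseudoinverse, $\hat I_{n\times n}=I_{n\times n}-\frac1n\vec1\vec1^\top$, and $[Z]_{a\ldots b}$ denotes the submatrix of rows $a$ through $b$ of $Z$. $\|\cdot\|_2$ is the spectral norm. *)

From HB Require Import structures.
From mathcomp Require Import all_boot all_order all_algebra.
From mathcomp Require Import boolp classical_sets reals sequences exp.
Set Implicit Arguments.
Unset Strict Implicit.
Unset Printing Implicit Defensive.
Import Order.TTheory GRing.Theory Num.Theory.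
Local Open Scope ring_scope.

Section Defs.
Variable R : realType.

(* A graph on n vertices with d edges: edge j goes from vertex src j to
   vertex tgt j (arbitrary orientation), with resistance r j. *)
Definition edges_ok (n d : nat) (src tgt : 'I_d -> 'I_n) (r : 'I_d -> R) :=
  (forall j, src j != tgt j) /\ (forall j, 0 < r j).

Definition adj (n d : nat) (src tgt : 'I_d -> 'I_n) : rel 'I_n :=
  fun u v => [exists j, ((src j == u) && (tgt j == v)) || ((src j == v) && (tgt j == u))].

Definition graph_connected (n d : nat) (src tgt : 'I_d -> 'I_n) :=
  forall u v : 'I_n, connect (adj src tgt) u v.

Definition incidence (n d : nat) (src tgt : 'I_d -> 'I_n) (r : 'I_d -> R)
  : 'M[R]_(n, d) :=
  \matrix_(i, j) (if i == src j then - (Num.sqrt (r j))^-1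
                  else if i == tgt j then (Num.sqrt (r j))^-1 else 0).

Definition laplacian (n d : nat) (src tgt : 'I_d -> 'I_n) (r : 'I_d -> R)
  : 'M[R]_n := incidence src tgt r *m (incidence src tgt r)^T.

Definition is_pinv (n : nat) (A P : 'M[R]_n) :=
  [/\ A *m P *m A = A, P *m A *m P = P,
      (A *m P)^T = A *m P & (P *m A)^T = P *m A].

Definition Ihat (n : nat) : 'M[R]_n := 1%:M - (n%:R)^-1 *: const_mx 1.

Definition is_min_nonzero_eig (n : nat) (A : 'M[R]_n) (l : R) :=
  [/\ l != 0, eigenvalue A l & forall a, eigenvalue A a -> a != 0 -> l <= a].

Definition is_max_eig (n : nat) (A : 'M[R]_n) (l : R) :=
  eigenvalue A l /\ forall a, eigenvalue A a -> a <= l.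

Definition vnorm (n : nat) (x : 'cV[R]_n) : R := Num.sqrt (\sum_i x i 0 ^+ 2).

Definition spec_norm (m n : nat) (A : 'M[R]_(m, n)) : R :=
  sup [set vnorm (A *m x) | x in [set x : 'cV[R]_n | vnorm x = 1]]%classic.

Definition tf_layer (m n : nat) (WV WQ WK WR : 'M[R]_m) (Z : 'M[R]_(m, n))
  : 'M[R]_(m, n) :=
  Z + WV *m Z *m Z^T *m WQ^T *m WK *m Z + WR *m Z.

Fixpoint tf (m n : nat) (WV WQ WK WR : nat -> 'M[R]_m) (k : nat)
  (Z0 : 'M[R]_(m, n)) : 'M[R]_(m, n) :=
  match k with
  | 0 => Z0
  | k'.+1 => tf_layer (WV k') (WQ k') (WK k') (WR k') (tf WV WQ WK WR k' Z0)
  end.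

Definition Z0 (n : nat) (delta : R) (Lap : 'M[R]_n) : 'M[R]_(n + n + n, n) :=
  col_mx (col_mx (Ihat n - delta *: Lap)^T 1%:M) (delta *: 1%:M)^T.

End Defs.

(* For suitable block weights one layer maps [X; I; C] to [X^2; I; C + C X], so L layers started
   at X = (Î - δℒ)^T, C = δI compute δ Σ_{k < 2^L} X^k by repeated squaring; a bias in the last
   layer subtracts (δ/n) 11^T.  Since ℒ kills the constants, X acts as B = I - δℒ on their
   orthogonal complement, the output Ω annihilates the constants on both sides, and
   ℒ Ω = I - B^{2^L}.  Thus for the error E = Ω - ℒ† and y the mean-zero part of x we get
   E x = E y and ℒ E y = -B^{2^L} y.  On mean-zero vectors ‖ℒ u‖ >= λmin ‖u‖, and
   ‖B u‖ <= (1 - δλmin) ‖u‖ because λmax <= 1/δ; both follow from a spectral decomposition of the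
   symmetric Laplacian.  Hence λmin ‖E x‖ <= (1 - δλmin)^{2^L} ‖x‖ <= exp(-δ 2^L λmin) ‖x‖. *)

From mathcomp Require Import all_boot all_order all_algebra.
From mathcomp Require Import classical_sets reals sequences exp.
From mathcomp Require Import complex spectral sesquilinear.
Set Implicit Arguments.
Unset Strict Implicit.
Unset Printing Implicit Defensive.
Import Order.TTheory GRing.Theory Num.Theory.
Local Open Scope ring_scope.

Section SquaredNorm.
Variable R : rcfType.

Definition sqnorm n (y : 'cV[R]_n) : R := (y^T *m y) 0 0.

Lemma sqnormE n (y : 'cV[R]_n) : sqnorm y = \sum_i y i 0 ^+ 2.
Proof. by rewrite /sqnorm mxE; apply: eq_bigr => i _; rewrite mxE expr2. Qed.

Lemma sqnorm_ge0 n (y : 'cV[R]_n) : 0 <= sqnorm y.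
Proof. by rewrite sqnormE sumr_ge0 // => i _; rewrite sqr_ge0. Qed.

Lemma sqnorm_eq0 n (y : 'cV[R]_n) : (sqnorm y == 0) = (y == 0).
Proof.
rewrite sqnormE psumr_eq0 => [|i _]; last exact: sqr_ge0.
apply/allP/eqP => [y0|-> i _]; last by rewrite mxE sqrf_eq0 eqxx.
apply/matrixP => i j; rewrite ord1 mxE; apply/eqP.
by rewrite -sqrf_eq0; apply: (implyP (y0 i (mem_index_enum i))).
Qed.

Lemma sqnorm_gt0 n (y : 'cV[R]_n) : y != 0 -> 0 < sqnorm y.
Proof. by rewrite lt_def sqnorm_eq0 sqnorm_ge0 andbT. Qed.

Lemma sqnormZ n a (y : 'cV[R]_n) : sqnorm (a *: y) = a ^+ 2 * sqnorm y.
Proof.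
rewrite !sqnormE mulr_sumr; apply: eq_bigr => i _.
by rewrite mxE exprMn.
Qed.

Lemma sqnormN n (y : 'cV[R]_n) : sqnorm (- y) = sqnorm y.
Proof. by rewrite -scaleN1r sqnormZ sqrrN expr1n mul1r. Qed.

Lemma sqnormD_ortho n (y z : 'cV[R]_n) :
  y^T *m z = 0 -> sqnorm (y + z) = sqnorm y + sqnorm z.
Proof.
move=> yz; have zy : z^T *m y = 0 by rewrite -[y]trmxK -trmx_mul yz trmx0.
by rewrite /sqnorm [(y + z)^T]linearD /= mulmxDl !mulmxDr yz zy addr0 add0r mxE.
Qed.

Lemma sqnorm_sub_proj_le n (P : 'M[R]_n) (x : 'cV[R]_n) :
  P^T = P -> P *m P = P -> sqnorm (x - P *m x) <= sqnorm x.
Proof.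
move=> Psym Pid.
have -> : sqnorm x = sqnorm ((x - P *m x) + P *m x) by rewrite subrK.
rewrite [sqnorm (_ + P *m x)]sqnormD_ortho ?lerDl ?sqnorm_ge0 //.
by rewrite raddfB /= mulmxBl trmx_mul Psym -mulmxA (mulmxA P) Pid subrr.
Qed.

End SquaredNorm.

Lemma vnorm_sqnorm (R : realType) n (y : 'cV[R]_n) : vnorm y = Num.sqrt (sqnorm y).
Proof. by rewrite /vnorm sqnormE. Qed.

Lemma spec_norm_le (R : realType) m n (A : 'M[R]_(m, n)) K :
  (0 < n)%N -> 0 <= K -> (forall x, sqnorm (A *m x) <= K ^+ 2 * sqnorm x) ->
  spec_norm A <= K.
Proof.
move=> n_gt0 K_ge0 A_le; apply: ge_sup.
  exists (vnorm (A *m delta_mx (Ordinal n_gt0) 0)), (delta_mx (Ordinal n_gt0) 0) => //=.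
  rewrite /vnorm (bigD1 (Ordinal n_gt0)) //= big1 => [|i /negbTE i_neq]; last first.
    by rewrite mxE i_neq expr0n.
  by rewrite mxE !eqxx expr1n addr0 sqrtr1.
move=> _ [x /= x1 <-]; rewrite vnorm_sqnorm -(ger0_norm K_ge0) -sqrtr_sqr ler_wsqrtr //.
have : sqnorm x = 1.
  move: x1; rewrite vnorm_sqnorm => /(congr1 (fun v => v ^+ 2)).
  by rewrite sqr_sqrtr ?sqnorm_ge0 ?expr1n.
by move: (A_le x) => /[swap] ->; rewrite mulr1.
Qed.

(* The spectral theorem of MathComp is stated over an algebraically closed field: we
   diagonalise in R[i], and the real and imaginary parts of a complex eigenrow of a real
   matrix for a real eigenvalue are real eigenrows. *)
Section RealSymmetricSpectral.
Local Open Scope sesquilinear_scope.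
Variable R : rcfType.
Local Notation C := R[i].
Local Notation toC := (real_complex R).
Local Notation Re := (@complex.Re R).
Local Notation Im := (@complex.Im R).

Lemma Re_mul_real (z : C) x : Re (z * toC x) = Re z * x.
Proof. by case: z => a b /=; rewrite mulr0 subr0. Qed.

Lemma Im_mul_real (z : C) x : Im (z * toC x) = Im z * x.
Proof. by case: z => a b /=; rewrite mulr0 add0r. Qed.

Lemma conj_toC x : Num.conj (toC x) = toC x.
Proof. exact: conjc_real. Qed.

Lemma map_Re_mulmx_real m n p (A : 'M[C]_(m, n)) (B : 'M[R]_(n, p)) :
  map_mx Re (A *m map_mx toC B) = map_mx Re A *m B.
Proof.
apply/matrixP => i j; rewrite !mxE (linear_sum (Re : Rcomplex R -> R)).
by apply: eq_bigr => k _; rewrite [in RHS]mxE mxE; apply: Re_mul_real.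
Qed.

Lemma map_Im_mulmx_real m n p (A : 'M[C]_(m, n)) (B : 'M[R]_(n, p)) :
  map_mx Im (A *m map_mx toC B) = map_mx Im A *m B.
Proof.
apply/matrixP => i j; rewrite !mxE (linear_sum (Im : Rcomplex R -> R)).
by apply: eq_bigr => k _; rewrite [in RHS]mxE mxE; apply: Im_mul_real.
Qed.

Lemma eigenrow_Re n (M : 'M[R]_n) (v : 'rV[C]_n) x :
  v *m map_mx toC M = toC x *: v -> map_mx Re v *m M = x *: map_mx Re v.
Proof.
move=> vM; rewrite -map_Re_mulmx_real vM.
by apply/rowP => j; rewrite !mxE mulrC Re_mul_real mulrC.
Qed.

Lemma eigenrow_Im n (M : 'M[R]_n) (v : 'rV[C]_n) x :
  v *m map_mx toC M = toC x *: v -> map_mx Im v *m M = x *: map_mx Im v.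
Proof.
move=> vM; rewrite -map_Im_mulmx_real vM.
by apply/rowP => j; rewrite !mxE mulrC Im_mul_real mulrC.
Qed.

Lemma real_symmetric_diagonalization n (M : 'M[R]_n) : M^T = M ->
  exists (P : 'M[C]_n) (d : 'rV[R]_n),
    P^t* *m P = 1%:M /\ P *m map_mx toC M = diag_mx (map_mx toC d) *m P.
Proof.
move=> Msym; set Mc := map_mx toC M.
have Mherm : Mc \is hermsymmx.
  apply/is_hermitianmxP; rewrite expr0 scale1r; apply/matrixP => i j.
  by rewrite !mxE conj_toC -[in LHS]Msym mxE.
set P := spectralmx Mc; set D := spectral_diag Mc.
have PU := spectral_unitarymx Mc.
have PPt : P *m P^t* = 1%:M by apply/unitarymxP.
have PtP : P^t* *m P = 1%:M by rewrite -invmx_unitary // mulVmx ?spectral_unit.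
have Dreal : D = map_mx toC (map_mx Re D).
  apply/matrixP => i j; rewrite !mxE RRe_real //.
  by have /mxOverP := hermitian_spectral_diag_real Mherm; apply.
exists P, (map_mx Re D); split => //.
have -> : Mc = P^t* *m diag_mx D *m P.
  by rewrite -invmx_unitary //; apply/orthomx_spectralP/hermitian_normalmx.
by rewrite -Dreal !mulmxA PPt mul1mx.
Qed.

Lemma real_symmetric_sqnorm n (M : 'M[R]_n) (y : 'cV[R]_n) : M^T = M ->
  exists c d : 'I_n -> R,
    [/\ forall i, 0 <= c i,
        forall i, c i != 0 -> exists2 u : 'rV[R]_n, u *m M = d i *: u & (u *m y) 0 0 != 0 &
        forall a b, sqnorm ((a%:M + b *: M) *m y) = \sum_i c i * (a + b * d i) ^+ 2].
Proof.
move=> /real_symmetric_diagonalization [P [d [PtP PM]]].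
set w := P *m map_mx toC y.
have Pw i : row i P *m map_mx toC y = row i w by rewrite row_mul.
exists (fun i => Re (w i 0) ^+ 2 + Im (w i 0) ^+ 2), (fun i => d 0 i); split.
- by move=> i; rewrite addr_ge0 ?sqr_ge0.
- move=> i; have eig : row i P *m map_mx toC M = toC (d 0 i) *: row i P.
    by rewrite -row_mul PM row_mul row_diag_mx -scalemxAl -rowE mxE.
  have Rew : (map_mx Re (row i P) *m y) 0 0 = Re (w i 0).
    by rewrite -map_Re_mulmx_real Pw !mxE.
  have Imw : (map_mx Im (row i P) *m y) 0 0 = Im (w i 0).
    by rewrite -map_Im_mulmx_real Pw !mxE.
  have [Re0|Re_neq0] := eqVneq (Re (w i 0)) 0.
    rewrite Re0 expr0n add0r sqrf_eq0 => Im_neq0.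
    by exists (map_mx Im (row i P)); rewrite ?Imw // (eigenrow_Im eig).
  by move=> _; exists (map_mx Re (row i P)); rewrite ?Rew // (eigenrow_Re eig).
move=> a b; set z := (a%:M + b *: M) *m y; apply: (@complexI R).
have Pz i : (P *m map_mx toC z) i 0 = toC (a + b * d 0 i) * w i 0.
  rewrite /z map_mxM mulmxA map_mxD map_scalar_mx map_mxZ mulmxDr mul_mx_scalar.
  rewrite -scalemxAr PM mulmxDl -!scalemxAl -mulmxA -/w mul_diag_mx !mxE.
  by rewrite rmorphD rmorphM mulrDl mulrA.
have normP (v : 'cV[C]_n) : (P *m v)^t* *m (P *m v) = v^t* *m v.
  by rewrite trmx_mul map_mxM -mulmxA (mulmxA _ P) PtP mul1mx.
have -> : toC (sqnorm z) = ((map_mx toC z)^t* *m map_mx toC z) 0 0.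
  rewrite /sqnorm !mxE rmorph_sum; apply: eq_bigr => k _.
  by rewrite !mxE rmorphM conj_toC.
rewrite -normP mxE rmorph_sum; apply: eq_bigr => i _.
have -> : ((P *m map_mx toC z)^t*) 0 i = ((P *m map_mx toC z) i 0)^* by rewrite !mxE.
by rewrite Pz -normCKC normrM exprMn normCKC conj_toC -add_Re2_Im2 -!rmorphM mulrC -expr2.
Qed.

End RealSymmetricSpectral.

Section Laplacian.
Variables (R : realType) (n d : nat) (src tgt : 'I_d -> 'I_n) (r : 'I_d -> R).
Hypothesis edges : edges_ok src tgt r.
Local Notation B := (incidence src tgt r).
Local Notation Lap := (laplacian src tgt r).

Lemma laplacian_sym : Lap^T = Lap.
Proof. by rewrite /laplacian trmx_mul trmxK. Qed.

Lemma sum_mul_incidence (f : 'I_n -> R) j :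
  \sum_i f i * B i j = (f (tgt j) - f (src j)) / Num.sqrt (r j).
Proof.
have tgt_src : tgt j != src j by rewrite eq_sym; case: edges => ->.
rewrite (bigD1 (src j)) //= (bigD1 (tgt j)) //= big1 ?addr0.
  by rewrite !mxE eqxx (negbTE tgt_src) eqxx mulrN mulrBl addrC.
by move=> i /andP[i_src i_tgt]; rewrite mxE (negbTE i_src) (negbTE i_tgt) mulr0.
Qed.

Lemma const_mx_laplacian m : (const_mx 1 : 'M[R]_(m, n)) *m Lap = 0.
Proof.
rewrite /laplacian mulmxA.
have -> : const_mx 1 *m B = 0 :> 'M[R]_(m, d).
  apply/matrixP => i j; rewrite !mxE.
  under eq_bigr do rewrite mxE.
  by rewrite (sum_mul_incidence (fun _ => 1)) subrr mul0r.
by rewrite mul0mx.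
Qed.

Lemma laplacian_const_mx m : Lap *m (const_mx 1 : 'M[R]_(n, m)) = 0.
Proof.
by apply: trmx_inj; rewrite trmx_mul trmx_const laplacian_sym const_mx_laplacian trmx0.
Qed.

Lemma laplacian_quadratic_form (a : 'rV[R]_n) :
  (a *m Lap *m a^T) 0 0 = \sum_j ((a 0 (tgt j) - a 0 (src j)) / Num.sqrt (r j)) ^+ 2.
Proof.
rewrite /laplacian !mulmxA -mulmxA -trmx_mul mxE; apply: eq_bigr => j _.
by rewrite [_^T _ _]mxE -expr2 mxE sum_mul_incidence.
Qed.

Lemma laplacian_eigenvalue_ge0 e : eigenvalue Lap e -> 0 <= e.
Proof.
move=> /eigenvalueP [v ve v_neq0].
have : 0 <= (v *m Lap *m v^T) 0 0.
  by rewrite laplacian_quadratic_form sumr_ge0 // => j _; rewrite sqr_ge0.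
have vv : 0 < (v *m v^T) 0 0.
  by rewrite -[v in v *m _]trmxK sqnorm_gt0 // trmx_eq0.
by rewrite ve -scalemxAl mxE pmulr_lge0.
Qed.

Lemma laplacian_ker_edge (a : 'rV[R]_n) :
  a *m Lap = 0 -> forall j, a 0 (src j) = a 0 (tgt j).
Proof.
move=> aL j; have := laplacian_quadratic_form a; rewrite aL mul0mx mxE.
move=> /esym/(psumr_eq0P (fun k _ => sqr_ge0 _))/(_ j isT)/eqP.
rewrite sqrf_eq0 mulf_eq0 invr_eq0 sqrtr_eq0 subr_eq0 leNgt; case: edges => _ -> /=.
by rewrite orbF => /eqP.
Qed.

Hypothesis connected : graph_connected src tgt.

Lemma laplacian_ker_const (a : 'rV[R]_n) :
  a *m Lap = 0 -> forall u v, a 0 u = a 0 v.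
Proof.
move=> aL u v; have a_edge := laplacian_ker_edge aL.
have closed_level : fingraph.closed (adj src tgt) [pred w | a 0 w == a 0 u].
  by move=> x y /existsP[j /orP[] /andP[/eqP <- /eqP <-]]; rewrite !inE a_edge.
by have := closed_connect closed_level (connected u v); rewrite !inE eqxx => /esym/eqP.
Qed.

Variables lmin lmax : R.
Hypothesis lmin_spec : is_min_nonzero_eig Lap lmin.
Hypothesis lmax_spec : is_max_eig Lap lmax.

Lemma lmin_gt0 : 0 < lmin.
Proof.
by case: lmin_spec => lmin_neq0 /laplacian_eigenvalue_ge0 lmin_ge0 _; rewrite lt_def lmin_neq0.
Qed.

Lemma lmin_le_lmax : lmin <= lmax.
Proof. by case: lmax_spec lmin_spec => _ le_lmax [_ /le_lmax]. Qed.

Lemma laplacian_eigenrow_bounds (u : 'rV[R]_n) e (y : 'cV[R]_n) :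
  \sum_k y k 0 = 0 -> u *m Lap = e *: u -> (u *m y) 0 0 != 0 -> lmin <= e <= lmax.
Proof.
move=> y_sum0 ue uy_neq0.
have u_neq0 : u != 0 by apply: contraNneq uy_neq0 => ->; rewrite mul0mx mxE.
have e_eig : eigenvalue Lap e by apply/eigenvalueP; exists u.
have e_neq0 : e != 0.
  apply: contraNneq uy_neq0 => e0; move: ue; rewrite e0 scale0r => /laplacian_ker_const uc.
  have [k0 _] : exists k0 : 'I_n, u 0 k0 != 0.
    apply/existsP; apply: contraR u_neq0; rewrite negb_exists => /forallP u0.
    by apply/eqP/rowP => k; rewrite mxE; apply/eqP/negPn/u0.
  rewrite mxE (eq_bigr (fun k => u 0 k0 * y k 0)) => [|k _]; last by rewrite (uc k k0).
  by rewrite -mulr_sumr y_sum0 mulr0.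
by case: lmin_spec lmax_spec => _ _ ge_lmin [_ le_lmax]; rewrite ge_lmin ?le_lmax.
Qed.

Lemma laplacian_sqnorm_le (a b a' b' : R) (y : 'cV[R]_n) :
  \sum_k y k 0 = 0 ->
  (forall e, lmin <= e <= lmax -> (a + b * e) ^+ 2 <= (a' + b' * e) ^+ 2) ->
  sqnorm ((a%:M + b *: Lap) *m y) <= sqnorm ((a'%:M + b' *: Lap) *m y).
Proof.
move=> y_sum0 le_ab.
have [c [dd [c_ge0 c_eig c_sqnorm]]] := real_symmetric_sqnorm y laplacian_sym.
rewrite !c_sqnorm; apply: ler_sum => i _.
have [->|/c_eig[u ue uy_neq0]] := eqVneq (c i) 0; first by rewrite !mul0r.
by rewrite ler_wpM2l // le_ab // (laplacian_eigenrow_bounds y_sum0 ue).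
Qed.

Lemma sqnorm_laplacian_ge (y : 'cV[R]_n) :
  \sum_k y k 0 = 0 -> lmin ^+ 2 * sqnorm y <= sqnorm (Lap *m y).
Proof.
move=> y_sum0.
have := @laplacian_sqnorm_le lmin 0 0 1 y y_sum0.
rewrite scale0r addr0 mul_scalar_mx sqnormZ scale1r mulmxDl mul_scalar_mx scale0r add0r.
apply=> e /andP[le_e _]; rewrite mul0r addr0 add0r mul1r.
have lmin_ge0 := ltW lmin_gt0.
by rewrite ler_sqr ?nnegrE // (le_trans lmin_ge0 le_e).
Qed.

Lemma sqnorm_laplacian_step_le (delta : R) (y : 'cV[R]_n) :
  0 < delta -> lmax <= delta^-1 -> \sum_k y k 0 = 0 ->
  sqnorm ((1%:M - delta *: Lap) *m y) <= (1 - delta * lmin) ^+ 2 * sqnorm y.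
Proof.
move=> delta_gt0 lmax_le y_sum0.
have := @laplacian_sqnorm_le 1 (- delta) (1 - delta * lmin) 0 y y_sum0.
rewrite scaleNr scale0r addr0 mul_scalar_mx sqnormZ.
apply=> e /andP[le_e e_le]; rewrite mul0r addr0 mulNr.
have de_le1 : delta * e <= 1 by rewrite -ler_pdivlMl // mulr1 (le_trans e_le).
have dlmin_le : delta * lmin <= delta * e by rewrite ler_pM2l.
rewrite ler_sqr ?nnegrE ?subr_ge0 ?(le_trans dlmin_le) //.
by rewrite lerD2l lerN2.
Qed.

End Laplacian.

Arguments laplacian_sym {R n d src tgt r}.

Section Transformer.
Variables (R : realType) (n L : nat) (delta : R).

Definition tf_WV : 'M[R]_(n + n + n) := block_mx (block_mx 1%:M 0 0 0) 0 0 1%:M.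
Definition tf_WK : 'M[R]_(n + n + n) := block_mx (block_mx 0 0 1%:M 0) 0 0 0.
Definition tf_bias (k : nat) : 'M[R]_n :=
  if k == L.-1 then - (delta / n%:R) *: const_mx 1 else 0.
Definition tf_WR (k : nat) : 'M[R]_(n + n + n) :=
  block_mx (block_mx (- 1%:M) 0 0 0) 0 (row_mx 0 (tf_bias k)) 0.

Lemma tf_layerE k (X C : 'M[R]_n) :
  tf_layer tf_WV 1%:M tf_WK (tf_WR k) (col_mx (col_mx X 1%:M) C)
  = col_mx (col_mx (X * X) 1%:M) (C + C *m X + tf_bias k).
Proof.
rewrite /tf_layer trmx1 mulmx1 -!mulmxA.
have -> : tf_WK *m col_mx (col_mx X 1%:M) C = col_mx (col_mx 0 X) 0.
  by rewrite /tf_WK !mul_block_col !mul0mx !mul1mx ?addr0 ?add0r.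
have -> : (col_mx (col_mx X 1%:M) C)^T *m col_mx (col_mx 0 X) 0 = X.
  by rewrite !tr_col_mx !mul_row_col !mulmx0 trmx1 mul1mx ?addr0 ?add0r.
rewrite mulmxA.
have -> : tf_WV *m col_mx (col_mx X 1%:M) C = col_mx (col_mx X 0) C.
  by rewrite /tf_WV !mul_block_col !mul0mx !mul1mx ?addr0 ?add0r.
have -> : tf_WR k *m col_mx (col_mx X 1%:M) C = col_mx (col_mx (- X) 0) (tf_bias k).
  rewrite /tf_WR !mul_block_col !mul0mx !mul_row_col !mul0mx !mulmx1 ?addr0 ?add0r.
  by rewrite mulNmx mul1mx.
by rewrite !mul_col_mx mul0mx !add_col_mx !addr0 addrAC subrr add0r.
Qed.

Lemma geometric_sum_double (X : 'M[R]_n) t :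
  \sum_(k < t) X ^+ k + (\sum_(k < t) X ^+ k) *m X ^+ t = \sum_(k < t + t) X ^+ k.
Proof.
rewrite big_split_ord /=; congr (_ + _); rewrite mulmxE mulr_suml.
by apply: eq_bigr => i _; rewrite -exprD addnC.
Qed.

Local Notation tf_run := (tf (fun=> tf_WV) (fun=> 1%:M) (fun=> tf_WK) tf_WR).

Lemma tf_run_squaring (X : 'M[R]_n) l : (l <= L.-1)%N ->
  tf_run l (col_mx (col_mx X 1%:M) (delta *: 1%:M)) =
  col_mx (col_mx (X ^+ (2 ^ l)) 1%:M) (delta *: \sum_(k < 2 ^ l) X ^+ k).
Proof.
elim: l => [|l IH] l_le /=; first by rewrite expr1 big_ord1 expr0.
rewrite IH ?(ltnW l_le) // tf_layerE /tf_bias ifF ?addr0; last first.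
  by apply/negbTE; rewrite neq_ltn l_le.
rewrite -scalemxAl -scalerDr geometric_sum_double -exprD.
by rewrite expnS mul2n -addnn.
Qed.

Lemma tf_run_output (X : 'M[R]_n) : (1 <= L)%N ->
  dsubmx (tf_run L (col_mx (col_mx X 1%:M) (delta *: 1%:M))) =
  delta *: \sum_(k < 2 ^ L) X ^+ k - (delta / n%:R) *: const_mx 1.
Proof.
move=> L_gt0; have -> : tf_run L = tf_run L.-1.+1 by rewrite prednK.
rewrite /= tf_run_squaring // tf_layerE col_mxKd /tf_bias eqxx.
rewrite scaleNr -scalemxAl -scalerDr geometric_sum_double.
by rewrite [(2 ^ _ + _)%N]addnn -mul2n -expnS prednK.
Qed.

End Transformer.

Section PseudoInverse.
Variables (R : realType) (n : nat) (A Ad : 'M[R]_n).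
Hypotheses (A_sym : A^T = A) (Ad_pinv : is_pinv A Ad).

Lemma pinv_mulmx_ker m (Q : 'M[R]_(n, m)) : A *m Q = 0 -> Ad *m Q = 0.
Proof.
case: Ad_pinv => _ AdAAd AAd_sym _ AQ.
have -> : Ad = Ad *m Ad^T *m A by rewrite -{1}AdAAd -mulmxA -AAd_sym trmx_mul A_sym mulmxA.
by rewrite -mulmxA AQ mulmx0.
Qed.

Lemma pinv_mulmx_coker m (Q : 'M[R]_(m, n)) : Q *m A = 0 -> Q *m Ad = 0.
Proof.
case: Ad_pinv => _ AdAAd _ AdA_sym QA.
have -> : Ad = A *m Ad^T *m Ad by rewrite -{1}AdAAd -AdA_sym trmx_mul A_sym.
by rewrite !mulmxA QA !mul0mx.
Qed.

Lemma pinv_sym_mulmxK m (Y : 'M[R]_(n, m)) : A *m (A *m (Ad *m Y)) = A *m Y.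
Proof.
case: Ad_pinv => AAdA _ AAd_sym _.
rewrite (mulmxA A Ad) -AAd_sym trmx_mul A_sym !mulmxA.
by move: (congr1 trmx AAdA); rewrite !trmx_mul A_sym mulmxA => ->.
Qed.

End PseudoInverse.

Section GeometricApproximation.
Variables (R : realType) (m d : nat).
(* 'M[R]_n is a nontrivial ring, hence an algebra, only when n is a successor. *)
Local Notation n := m.+1.
Variables (src tgt : 'I_d -> 'I_n) (r : 'I_d -> R).
Hypotheses (edges : edges_ok src tgt r) (connected : graph_connected src tgt).
Variable delta : R.
Local Notation Lap := (laplacian src tgt r).
Local Notation J := (const_mx 1 : 'M[R]_n).

Definition mean_mx : 'M[R]_n := n%:R^-1 *: J.
Definition step_mx : 'M[R]_n := 1%:M - delta *: Lap.
Definition input_mx : 'M[R]_n := (Ihat R n - delta *: Lap)^T.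
Definition approx_pinv t : 'M[R]_n :=
  delta *: \sum_(k < t.+1) input_mx ^+ k - (delta / n%:R) *: J.

Local Notation M := mean_mx.
Local Notation B := step_mx.
Local Notation X := input_mx.

Lemma mean_mx_sym : M^T = M.
Proof. by rewrite /mean_mx linearZ /= trmx_const. Qed.

Lemma mean_mx_idem : M *m M = M.
Proof.
have JJ : J *m J = n%:R *: J.
  apply/matrixP => i j; rewrite !mxE (eq_bigr (fun=> 1)) => [|k _]; last by rewrite !mxE mulr1.
  by rewrite sumr_const card_ord mulr1.
by rewrite /mean_mx -scalemxAl -scalemxAr JJ !scalerA mulrAC mulVf ?pnatr_eq0 ?mul1r.
Qed.

Lemma mean_mx_laplacian : M *m Lap = 0.
Proof. by rewrite /mean_mx -scalemxAl const_mx_laplacian ?scaler0. Qed.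

Lemma laplacian_mean_mx : Lap *m M = 0.
Proof. by rewrite /mean_mx -scalemxAr laplacian_const_mx ?scaler0. Qed.

Lemma mean_mx_step : M *m B = M.
Proof. by rewrite mulmxBr mulmx1 -scalemxAr mean_mx_laplacian scaler0 subr0. Qed.

Lemma step_mean_mx : B *m M = M.
Proof. by rewrite mulmxBl mul1mx -scalemxAl laplacian_mean_mx scaler0 subr0. Qed.

Lemma input_mxE : X = B - M.
Proof.
rewrite /input_mx /Ihat !linearB /= !linearZ /= trmx_const tr_scalar_mx laplacian_sym.
by rewrite /mean_mx /step_mx !scalerN addrAC.
Qed.

Lemma input_mean_mx : X * M = 0.
Proof. by rewrite input_mxE mulrBl -!mulmxE step_mean_mx mean_mx_idem subrr. Qed.

Lemma mean_input_mx : M * X = 0.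
Proof. by rewrite input_mxE mulrBr -!mulmxE mean_mx_step mean_mx_idem subrr. Qed.

Lemma sum_input_exp_mean t : (\sum_(k < t.+1) X ^+ k) * M = M.
Proof.
rewrite mulr_suml big_ord_recl expr0 mul1r big1 ?addr0 // => k _.
by rewrite exprSr -mulrA input_mean_mx mulr0.
Qed.

Lemma mean_sum_input_exp t : M * (\sum_(k < t.+1) X ^+ k) = M.
Proof.
rewrite mulr_sumr big_ord_recl expr0 mulr1 big1 ?addr0 // => k _.
by rewrite exprS mulrA mean_input_mx mul0r.
Qed.

Lemma approx_pinvE t : approx_pinv t = delta *: (\sum_(k < t.+1) X ^+ k - M).
Proof. by rewrite /approx_pinv /mean_mx scalerBr scalerA. Qed.

Lemma approx_pinv_mean t : approx_pinv t * M = 0.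
Proof.
by rewrite approx_pinvE -scalerAl mulrBl sum_input_exp_mean -mulmxE mean_mx_idem subrr scaler0.
Qed.

Lemma mean_approx_pinv t : M * approx_pinv t = 0.
Proof.
by rewrite approx_pinvE -scalerAr mulrBr mean_sum_input_exp -mulmxE mean_mx_idem subrr scaler0.
Qed.

Lemma step_exp_mean k : B ^+ k * M = M.
Proof.
by elim: k => [|k IH]; rewrite ?mul1r // exprSr -mulrA -mulmxE step_mean_mx mulmxE.
Qed.

Lemma mean_step_exp k : M *m B ^+ k = M.
Proof.
by elim: k => [|k IH]; rewrite ?mulmx1 // exprS mulmxE mulrA -mulmxE mean_mx_step.
Qed.

Lemma laplacian_input_exp k : Lap * X ^+ k = Lap * B ^+ k.
Proof.
elim: k => [|k IH]; first by rewrite !expr0.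
rewrite !exprSr !mulrA IH input_mxE mulrBr -[_ * _ * M]mulrA step_exp_mean.
by rewrite -mulmxE laplacian_mean_mx subr0.
Qed.

Lemma laplacian_approx_pinv t : Lap * approx_pinv t = 1 - B ^+ t.+1.
Proof.
rewrite approx_pinvE -scalerAr mulrBr mulr_sumr.
under eq_bigr do rewrite laplacian_input_exp.
rewrite -mulr_sumr -mulmxE laplacian_mean_mx subr0 scalerAl.
have -> : delta *: Lap = 1 - B by rewrite /step_mx opprB addrC subrK.
by rewrite -opprB mulNr -subrX1 opprB.
Qed.

Lemma mean_mx_eq0 (y : 'cV[R]_n) : M *m y = 0 -> \sum_k y k 0 = 0.
Proof.
move/matrixP/(_ 0 0); rewrite !mxE (eq_bigr (fun k => n%:R^-1 * y k 0)) => [|k _].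
  by rewrite -mulr_sumr => /eqP; rewrite mulf_eq0 invr_eq0 pnatr_eq0 /= => /eqP.
by rewrite !mxE mulr1.
Qed.

Variable Ldag : 'M[R]_n.
Hypothesis Ldag_pinv : is_pinv Lap Ldag.

Lemma laplacian_pinvK (y : 'cV[R]_n) : M *m y = 0 -> Lap *m (Ldag *m y) = y.
Proof.
move=> My0; set v := y - Lap *m (Ldag *m y).
have Lv : v^T *m Lap = 0.
  rewrite -laplacian_sym -trmx_mul /v mulmxBr pinv_sym_mulmxK ?laplacian_sym //.
  by rewrite subrr trmx0.
have Mv : M *m v = 0.
  by rewrite /v mulmxBr My0 (mulmxA M Lap) mean_mx_laplacian mul0mx subrr.
suff : v = 0 by move/eqP; rewrite subr_eq0 => /eqP <-.
have v_const := laplacian_ker_const edges connected Lv.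
clearbody v; apply/matrixP => i j; rewrite ord1 -Mv mxE.
rewrite (eq_bigr (fun=> n%:R^-1 * v i 0)) => [|k _]; last first.
  by rewrite !mxE mulr1; have := v_const k i; rewrite !mxE => ->.
by rewrite sumr_const card_ord -mulrnAl -mulr_natr mulVf ?pnatr_eq0 ?mul1r.
Qed.

Variables lmin lmax : R.
Hypothesis lmin_spec : is_min_nonzero_eig Lap lmin.
Hypothesis lmax_spec : is_max_eig Lap lmax.
Hypotheses (delta_gt0 : 0 < delta) (lmax_le : lmax <= delta^-1).

Lemma step_exp_sqnorm_le k (y : 'cV[R]_n) : M *m y = 0 ->
  sqnorm (B ^+ k *m y) <= ((1 - delta * lmin) ^+ 2) ^+ k * sqnorm y.
Proof.
move=> My0; elim: k => [|k IH]; first by rewrite expr0 mul1mx expr0 mul1r.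
have sum0 : \sum_i (B ^+ k *m y) i 0 = 0.
  by apply: mean_mx_eq0; rewrite mulmxA mean_step_exp.
rewrite exprS -mulmxA.
apply: le_trans (sqnorm_laplacian_step_le edges connected lmin_spec lmax_spec
                   delta_gt0 lmax_le sum0) _.
by rewrite [_ ^+ k.+1]exprS -mulrA ler_wpM2l ?sqr_ge0.
Qed.

Lemma approx_pinv_error t (x : 'cV[R]_n) :
  lmin ^+ 2 * sqnorm ((approx_pinv t - Ldag) *m x)
  <= ((1 - delta * lmin) ^+ 2) ^+ t.+1 * sqnorm x.
Proof.
set E := approx_pinv t - Ldag; set y := x - M *m x.
have My0 : M *m y = 0 by rewrite mulmxBr mulmxA mean_mx_idem subrr.
have EM : E *m M = 0.
  rewrite mulmxBl (pinv_mulmx_ker laplacian_sym Ldag_pinv laplacian_mean_mx).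
  by rewrite subr0 mulmxE approx_pinv_mean.
have ME : M *m E = 0.
  rewrite mulmxBr (pinv_mulmx_coker laplacian_sym Ldag_pinv mean_mx_laplacian).
  by rewrite subr0 mulmxE mean_approx_pinv.
have Ex : E *m x = E *m y by rewrite mulmxBr mulmxA EM mul0mx subr0.
have LE : Lap *m E = 1 - B ^+ t.+1 - Lap *m Ldag.
  by rewrite mulmxBr mulmxE laplacian_approx_pinv.
have LEy : Lap *m (E *m y) = - (B ^+ t.+1 *m y).
  rewrite mulmxA LE mulmxBl -(mulmxA Lap) laplacian_pinvK //.
  by rewrite mulmxBl mul1mx addrAC subrr add0r.
have MEy : M *m (E *m y) = 0 by rewrite mulmxA ME mul0mx.
have := sqnorm_laplacian_ge edges connected lmin_spec lmax_spec (mean_mx_eq0 MEy).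
rewrite LEy sqnormN -Ex => /le_trans; apply.
apply: le_trans (step_exp_sqnorm_le _ My0) _.
apply: ler_wpM2l; first exact/exprn_ge0/sqr_ge0.
exact: sqnorm_sub_proj_le mean_mx_sym mean_mx_idem.
Qed.

Lemma delta_lmin_le1 : delta * lmin <= 1.
Proof.
by rewrite -ler_pdivlMl // mulr1 (le_trans (lmin_le_lmax lmin_spec lmax_spec)).
Qed.

Lemma approx_pinv_spec_norm_le t :
  spec_norm (approx_pinv t - Ldag) <= lmin^-1 * (1 - delta * lmin) ^+ t.+1.
Proof.
have lmin_gt0 := lmin_gt0 edges lmin_spec.
have rho_ge0 : 0 <= 1 - delta * lmin by rewrite subr_ge0 delta_lmin_le1.
apply: spec_norm_le => // [|x]; first by rewrite mulr_ge0 ?exprn_ge0 // invr_ge0 ltW.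
rewrite exprMn exprVn -exprM mulnC exprM -mulrA ler_pdivlMl ?exprn_gt0 //.
exact: approx_pinv_error.
Qed.

End GeometricApproximation.

Lemma expR_ge1Dx_pow (R : realType) (x : R) k :
  -1 <= x -> (1 + x) ^+ k <= expR (x * k%:R).
Proof.
move=> x_ge; rewrite expRM_natr lerXn2r ?nnegrE ?expR_ge0 ?expR_ge1Dx //.
by rewrite -lerBlDl sub0r.
Qed.

Theorem lemma4 (R : realType) (n L : nat) (delta : R) :
  (1 <= n)%N -> (1 <= L)%N -> 0 < delta ->
  exists WV WQ WK WR : nat -> 'M[R]_(n + n + n),
    forall (d : nat) (src tgt : 'I_d -> 'I_n) (r : 'I_d -> R),
      edges_ok src tgt r -> graph_connected src tgt ->
      forall (lmin lmax : R) (Ldag : 'M[R]_n),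
        is_min_nonzero_eig (laplacian src tgt r) lmin ->
        is_max_eig (laplacian src tgt r) lmax ->
        lmax <= delta^-1 ->
        is_pinv (laplacian src tgt r) Ldag ->
        spec_norm (dsubmx (tf WV WQ WK WR L (Z0 delta (laplacian src tgt r)))
                   - Ldag)
        <= lmin^-1 * expR (- (delta * 2 ^+ L * lmin)).
Proof.
move=> n_ge1 L_ge1 delta_gt0; case: n n_ge1 => // m _.
exists (fun=> tf_WV R m.+1), (fun=> 1%:M), (fun=> tf_WK R m.+1), (tf_WR m.+1 L delta).
move=> d src tgt r edges connected lmin lmax Ldag lmin_spec lmax_spec lmax_le Ldag_pinv.
have -> : Z0 delta (laplacian src tgt r)
          = col_mx (col_mx (input_mx src tgt r delta) 1%:M) (delta *: 1%:M).
  by rewrite /Z0 scalemx1 tr_scalar_mx.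
rewrite tf_run_output // -(prednK (expn_gt0 2 L)) -/(approx_pinv src tgt r delta _).
apply: le_trans (approx_pinv_spec_norm_le edges connected Ldag_pinv
                   lmin_spec lmax_spec delta_gt0 lmax_le _) _.
apply: ler_wpM2l; first by rewrite invr_ge0 ltW ?(lmin_gt0 edges lmin_spec).
have -> : - (delta * 2 ^+ L * lmin) = - (delta * lmin) * (2 ^ L)%:R.
  by rewrite natrX mulrAC mulNr.
rewrite prednK ?expn_gt0 //; apply: expR_ge1Dx_pow; rewrite lerNl opprK.
exact: delta_lmin_le1 lmin_spec lmax_spec delta_gt0 lmax_le.
Qed.
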